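(* Let $(R,m)$ and $(T,\eta)$ be Noetherian local rings and let $R\to T$ be a finite local ring homomorphism such that $T$ is a free $R$-module and $T/mT$ is Gorenstein. Let $J\subseteq T$ be an ideal and let $h:R\to T/J$ be the composite of $R\to T$ with the projection $T\to T/J$, so that $T/J$ carries the $R$-module structure induced from $T$. Then $h$ splits, i.e. there exists an $R$-linear map $\rho:T/J\to R$ with $\rho(1)=1$, if and only if $\mathrm{Ann}_TJ\not\subseteq mT$.
   Context: All rings are commutative with identity. *)

From HB Require Import structures.
From mathcomp Require Import all_boot all_order all_algebra.
Set Implicit Arguments. Unset Strict Implicit. Unset Printing Implicit Defensive.
Import Order.TTheory GRing.Theory Num.Theory.
Local Open Scope ring_scope.

Definition is_ideal (A : comPzRingType) (I : A -> Prop) : Prop :=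
  [/\ I 0, (forall x y, I x -> I y -> I (x + y)) & (forall a x, I x -> I (a * x))].

(* The set of non-units; for a comUnitRingType (nontrivial) ring, the ring is
   local iff this set is an ideal, and then it is the unique maximal ideal. *)
Definition nonunit (A : comUnitRingType) (x : A) : Prop := ~~ (x \is a GRing.unit).

Definition is_local (A : comUnitRingType) : Prop := is_ideal (@nonunit A).

Definition noetherian (A : comPzRingType) : Prop :=
  forall I : nat -> A -> Prop, (forall n, is_ideal (I n)) ->
    (forall n x, I n x -> I n.+1 x) ->
    exists N, forall n, (N <= n)%N -> forall x, I n x -> I N x.

Definition noetherian_local (A : comUnitRingType) : Prop :=
  noetherian A /\ is_local A.

Section Ext.
Variables (R T : comUnitRingType) (f : {rmorphism R -> T}).

Definition local_hom : Prop := forall r, nonunit r -> nonunit (f r).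

Definition module_finite : Prop :=
  exists n (g : 'I_n -> T), forall t, exists c : 'I_n -> R,
    t = \sum_(i < n) f (c i) * g i.

Definition module_free : Prop :=
  exists (I : eqType) (e : I -> T),
    (forall t, exists (s : seq I) (c : I -> R), t = \sum_(i <- s) f (c i) * e i) /\
    (forall (s : seq I) (c : I -> R), uniq s ->
        \sum_(i <- s) f (c i) * e i = 0 -> forall i, i \in s -> c i = 0).

Definition mT (t : T) : Prop :=
  exists s : seq (R * T), all (fun p => ~~ (p.1 \is a GRing.unit)) s /\
    t = \sum_(p <- s) f p.1 * p.2.

(* T/mT is an Artinian local ring (finite over the field
   R/m, with maximal ideal η/mT), so Gorenstein means type 1: its socle
   (0 :_{T/mT} η/mT) is a 1-dimensional vector space over the residue field,
   i.e. it is nonzero and generated by a single element s.  Written in T: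
   socle = {t | η t ⊆ mT} / mT. *)
Definition in_fiber_socle (t : T) : Prop := forall u : T, nonunit u -> mT (u * t).

Definition closed_fiber_gorenstein : Prop :=
  exists s : T, [/\ ~ mT s, in_fiber_socle s &
    forall t, in_fiber_socle t -> exists a : T, mT (t - a * s)].

(* h : R -> T/J splits: an R-linear map rho : T/J -> R with rho(1) = 1.
   Such maps correspond exactly to R-linear maps T -> R vanishing on J. *)
Definition splits (J : T -> Prop) : Prop :=
  exists rho : T -> R,
    [/\ (forall x y, rho (x + y) = rho x + rho y),
        (forall r x, rho (f r * x) = r * rho x),
        (forall j, J j -> rho j = 0) &
        rho 1 = 1].

Definition ann (J : T -> Prop) (t : T) : Prop := forall j, J j -> t * j = 0.

End Ext.

From HB Require Import structures.
From Stdlib Require Import Classical ClassicalEpsilon.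
From mathcomp Require Import all_boot all_order all_algebra.
From mathcomp Require Import generic_quotient ring_quotient.
Set Implicit Arguments. Unset Strict Implicit. Unset Printing Implicit Defensive.
Import Order.TTheory GRing.Theory Num.Theory.
Local Open Scope ring_scope.
Local Open Scope quotient_scope.

(* Fix an R-basis b of T and let psi be the coordinate form along a basis vector
   on which a generator s0 of the socle of T/mT has a unit coordinate.  Every
   nonunit of T has a power in mT (Cayley-Hamilton and locality), so in the
   Noetherian ring T every t outside mT has a multiple t x that lies in the
   socle and outside mT, hence, after rescaling x, is congruent to s0 modulo
   mT; so psi (t x) is a unit.  Checked over the residue field of R, this makes the Gram matrix
   (psi (b_i b_j)) invertible, so t |-> psi (t * _) maps T onto Hom_R(T, R).
   A splitting rho is then psi (t * _) with t J = 0 and psi t = rho 1 = 1, so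
   t is not in mT; conversely such a t gives the splitting
   y |-> psi (t x y) / psi (t x). *)

Section Ideal.
Variables (A : comPzRingType) (I : A -> Prop).
Hypothesis I_ideal : is_ideal I.

Lemma is_ideal0 : I 0. Proof. by case: I_ideal. Qed.

Lemma is_idealD x y : I x -> I y -> I (x + y).
Proof. by case: I_ideal => _ + _; apply. Qed.

Lemma is_idealMl a x : I x -> I (a * x).
Proof. by case: I_ideal => _ _; apply. Qed.

Lemma is_idealMr a x : I x -> I (x * a).
Proof. by rewrite mulrC; apply: is_idealMl. Qed.

Lemma is_idealN x : I x -> I (- x).
Proof. by rewrite -mulN1r; apply: is_idealMl. Qed.

Lemma is_idealB x y : I x -> I y -> I (x - y).
Proof. by move=> Ix Iy; apply: is_idealD => //; apply: is_idealN. Qed.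

Lemma is_ideal_sum (J : Type) (s : seq J) (P : pred J) (F : J -> A) :
  (forall j, P j -> I (F j)) -> I (\sum_(j <- s | P j) F j).
Proof. by move=> IF; apply: big_ind => //; [exact: is_ideal0 | exact: is_idealD]. Qed.

Definition colon (a : A) (y : A) : Prop := I (y * a).

Lemma colon_ideal a : is_ideal (colon a).
Proof.
rewrite /colon; split; first by rewrite mul0r; apply: is_ideal0.
  by move=> x y Ix Iy; rewrite mulrDl; apply: is_idealD.
by move=> c x Ix; rewrite -mulrA; apply: is_idealMl.
Qed.

End Ideal.

Lemma noetherian_maximal (A : comPzRingType) (X : Type) (I : X -> A -> Prop) (x0 : X) :
  noetherian A -> (forall x, is_ideal (I x)) ->
  exists x, forall y, (forall a, I x a -> I y a) -> forall a, I y a -> I x a.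
Proof.
move=> A_noeth I_ideal; apply: NNPP => no_max.
have step x : {y | (forall a, I x a -> I y a) /\ exists a, I y a /\ ~ I x a}.
  apply: constructive_indefinite_description; apply: NNPP => x_max.
  apply: no_max; exists x => y sub a Iya; apply: NNPP => nIxa.
  by apply: x_max; exists y; split => //; exists a.
pose chain k := iter k (fun x => sval (step x)) x0.
have [N chain_stable] := A_noeth (fun k => I (chain k)) (fun k => I_ideal _)
  (fun k => proj1 (svalP (step (chain k)))).
have [a [Ia nIa]] := proj2 (svalP (step (chain N))).
exact/nIa/(chain_stable N.+1 (leqnSn N)).
Qed.

Lemma unitrD_nonunit (A : comUnitRingType) (u y : A) : is_local A ->
  u \is a GRing.unit -> nonunit y -> (u + y) \is a GRing.unit.
Proof.
move=> A_local u_unit y_nonunit; apply/negPn/negP => uy_nonunit.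
have : nonunit (u + y - y) by apply: is_idealB.
by rewrite addrK /nonunit u_unit.
Qed.

Section ExtendedIdeal.
Variables (R T : comUnitRingType) (f : {rmorphism R -> T}).

Lemma mT_ideal : is_ideal (mT f).
Proof.
split; first by exists [::]; rewrite big_nil.
  move=> _ _ [s1 [s1_nonunit ->]] [s2 [s2_nonunit ->]].
  by exists (s1 ++ s2); rewrite all_cat s1_nonunit s2_nonunit big_cat.
move=> a _ [s [s_nonunit ->]]; exists [seq (p.1, a * p.2) | p <- s].
by rewrite all_map big_map mulr_sumr; split=> //; apply: eq_bigr => p _; rewrite mulrCA.
Qed.

Lemma mT_rmorph r x : nonunit r -> mT f (f r * x).
Proof. by exists [:: (r, x)]; rewrite /= big_seq1 andbT. Qed.

Lemma horner_map_mT (q : {poly R}) x :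
  (forall k, nonunit q`_k) -> mT f ((map_poly f q).[x]).
Proof.
move=> q_nonunit; rewrite horner_coef; apply: (is_ideal_sum mT_ideal) => k _.
by rewrite coef_map; apply: mT_rmorph.
Qed.

Hypothesis T_local : is_local T.

Lemma horner_map_unit (q : {poly R}) x : nonunit x ->
  q`_0 \is a GRing.unit -> (map_poly f q).[x] \is a GRing.unit.
Proof.
move=> x_nonunit q0_unit.
have q_low : take_poly 1 q = (q`_0)%:P.
  by apply/polyP => -[|k]; rewrite coef_take_poly coefC.
rewrite -(poly_take_drop 1 q) q_low rmorphD rmorphM /= map_polyC map_polyX.
rewrite hornerD hornerC hornerMX /=.
apply: unitrD_nonunit => //; first exact: rmorph_unit.
exact: is_idealMl.
Qed.

Lemma monic_root_expr_mT (p : {poly R}) x : p \is monic ->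
  (map_poly f p).[x] = 0 -> nonunit x -> exists j, mT f (x ^+ j).
Proof.
move=> p_monic px0 x_nonunit.
have some_unit : exists k, p`_k \is a GRing.unit.
  by exists (size p).-1; have /monicP := p_monic; rewrite /lead_coef => ->; exact: unitr1.
have [j pj_unit pj_min] := ex_minnP some_unit.
have low_mT : mT f ((map_poly f (take_poly j p)).[x]).
  apply: horner_map_mT => k; rewrite coef_take_poly; case: ifP => [kj|_].
    by apply/negP => /pj_min; rewrite leqNgt kj.
  by rewrite /nonunit unitr0.
have high_unit : (map_poly f (drop_poly j p)).[x] \is a GRing.unit.
  by apply: horner_map_unit; rewrite // coef_drop_poly.
exists j; move: px0.
rewrite -(poly_take_drop j p) rmorphD rmorphM /= map_polyXn hornerD hornerM hornerXn.
set low := (map_poly f _).[x] in low_mT *; set v := (map_poly f _).[x] in high_unit *.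
move/eqP; rewrite addrC addr_eq0 => /eqP vxj.
rewrite -(mulKr high_unit (x ^+ j)) vxj.
by apply: (is_idealMl mT_ideal); apply: (is_idealN mT_ideal).
Qed.

End ExtendedIdeal.

Section LinearForm.
Variables (R T : comUnitRingType) (f : {rmorphism R -> T}) (psi : T -> R).
Hypotheses (psiD : forall x y, psi (x + y) = psi x + psi y)
           (psiZ : forall r x, psi (f r * x) = r * psi x).

Lemma linear_form0 : psi 0 = 0.
Proof. by apply/eqP; rewrite -(subrr (psi 0)) -{2}(addr0 0) psiD addrK. Qed.

Lemma linear_form_sum (I : Type) (s : seq I) (P : pred I) (F : I -> T) :
  psi (\sum_(i <- s | P i) F i) = \sum_(i <- s | P i) psi (F i).
Proof. exact: (big_morph psi psiD linear_form0). Qed.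

Lemma linear_form_mT (R_local : is_local R) t : mT f t -> nonunit (psi t).
Proof.
move=> [s [s_nonunit ->]]; rewrite linear_form_sum big_seq.
apply: (is_ideal_sum R_local) => p p_s; rewrite psiZ.
exact: (is_idealMr R_local) (allP s_nonunit p p_s).
Qed.

End LinearForm.

Section FiberSocle.
Variables (R T : comUnitRingType) (f : {rmorphism R -> T}).
Hypotheses (T_noeth : noetherian T)
           (mT_nil : forall u, nonunit u -> exists k, mT f (u ^+ k)).

Lemma fiber_socle_multiple t : ~ mT f t ->
  exists x, ~ mT f (t * x) /\ in_fiber_socle f (t * x).
Proof.
(* Take a multiple a of t outside mT with (mT : a) maximal.  If u a were outside
   mT for a nonunit u, maximality would keep every u^k a outside mT, against
   the nilpotence of u modulo mT. *)
move=> t_nmT.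
pose X := {a : T | (exists x, a = t * x) /\ ~ mT f a}.
have tX : (exists x, t = t * x) /\ ~ mT f t by split=> //; exists 1; rewrite mulr1.
have [[a a_X] /= a_max] := noetherian_maximal
  (I := fun a : X => colon (mT f) (sval a)) (exist _ t tX) T_noeth
  (fun a => colon_ideal (mT_ideal f) _).
case: a_X a_max => [[x ->] a_nmT] a_max.
exists x; split=> // u u_nonunit; apply: NNPP => ua_nmT.
have no_power k : ~ mT f (u ^+ k * (t * x)).
  elim: k => [|k IHk]; first by rewrite expr0 mul1r.
  have ukX : (exists y, u ^+ k * (t * x) = t * y) /\ ~ mT f (u ^+ k * (t * x)).
    by split=> //; exists (x * u ^+ k); rewrite mulrCA (mulrC x).
  have sub y : colon (mT f) (t * x) y -> colon (mT f) (u ^+ k * (t * x)) y.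
    by rewrite /colon => yt; rewrite mulrCA; apply: (is_idealMl (mT_ideal f)).
  by rewrite exprS -mulrA => uk1; apply/ua_nmT/(a_max (exist _ _ ukX) sub).
have [N uN_mT] := mT_nil u_nonunit.
by apply: (no_power N); apply: (is_idealMr (mT_ideal f)).
Qed.

Variable s0 : T.
Hypotheses (s0_socle : in_fiber_socle f s0)
           (s0_gen : forall t, in_fiber_socle f t -> exists a, mT f (t - a * s0)).

Lemma fiber_socle_reach t : ~ mT f t -> exists x, mT f (t * x - s0).
Proof.
move=> /fiber_socle_multiple [x [tx_nmT tx_socle]].
have [c txc_mT] := s0_gen tx_socle.
have c_unit : c \is a GRing.unit.
  apply: NNPP => c_nonunit; apply: tx_nmT.
  rewrite -(subrK (c * s0) (t * x)).
  by apply: (is_idealD (mT_ideal f)) => //; apply: s0_socle; apply/negP.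
exists (x * c^-1).
have -> : t * (x * c^-1) - s0 = c^-1 * (t * x - c * s0).
  by rewrite mulrBr [c^-1 * (c * _)]mulrA mulVr // mul1r mulrA mulrC.
exact: (is_idealMl (mT_ideal f)).
Qed.

Lemma fiber_socle_form_nondeg (psi : T -> R) :
  (forall x y, psi (x + y) = psi x + psi y) ->
  (forall r x, psi (f r * x) = r * psi x) ->
  is_local R -> psi s0 \is a GRing.unit ->
  forall t, ~ mT f t -> exists x, psi (t * x) \is a GRing.unit.
Proof.
move=> psiD psiZ R_local psi_s0 t /fiber_socle_reach [x txs_mT]; exists x.
rewrite -(subrK s0 (t * x)) psiD addrC.
exact/unitrD_nonunit/(linear_form_mT psiD psiZ).
Qed.

End FiberSocle.

(* The locality proof [A_local] is carried as a parameter so that the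
   nonunits can be declared an ideal canonically. *)
Definition maximal_ideal (A : comUnitRingType) (A_local : is_local A) : pred A :=
  fun x => x \notin GRing.unit.

Lemma maximal_ideal_closed (A : comUnitRingType) (A_local : is_local A) :
  idealr_closed (maximal_ideal A_local).
Proof.
split; rewrite /maximal_ideal ?inE /=.
- exact: (is_ideal0 A_local).
- by rewrite unfold_in /maximal_ideal /= unitr1.
- by move=> a u v mu mv; apply: (is_idealD A_local) => //; apply: (is_idealMl A_local).
Qed.

HB.instance Definition _ (A : comUnitRingType) (A_local : is_local A) :=
  isIdealr.Build A (maximal_ideal A_local) (maximal_ideal_closed A_local).

Definition residue_ring (A : comUnitRingType) (A_local : is_local A) :=
  {ideal_quot (Idealr.clone A (maximal_ideal A_local) _)}.
(* An alias of [residue_ring] to carry the field structure declared below. *)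
Definition residue_field (A : comUnitRingType) (A_local : is_local A) :=
  residue_ring A_local.
HB.instance Definition _ (A : comUnitRingType) (A_local : is_local A) :=
  GRing.ComNzRing.on (residue_field A_local).

Section ResidueField.
Variables (A : comUnitRingType) (A_local : is_local A).
Local Notation k := (residue_field A_local).

Definition residue : {rmorphism A -> k} := \pi.

Lemma residue_eq0 x : (residue x == 0) = (x \notin GRing.unit).
Proof. by rewrite -(rmorph0 residue) /residue -Quotient.idealrBE subr0. Qed.

Lemma residue_repr (q : residue_ring A_local) : residue (repr q) = q.
Proof. exact: reprK. Qed.

Definition residue_inv (x : k) : k := residue (repr (x : residue_ring A_local))^-1.

Lemma residue_mulVf (x : k) : x != 0 -> residue_inv x * x = 1.
Proof.
rewrite -[x in x != 0]residue_repr residue_eq0 negbK => x_unit.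
rewrite /residue_inv -{2}[x]residue_repr.
by rewrite -[_ * _]/(residue _ * residue _) -rmorphM mulVr // rmorph1.
Qed.

Lemma residue_inv0 : residue_inv 0 = 0.
Proof.
have : residue (repr (0 : residue_ring A_local)) == 0 by rewrite residue_repr.
by rewrite residue_eq0 => r0_nonunit; rewrite /residue_inv invr_out // residue_repr.
Qed.

End ResidueField.

HB.instance Definition _ (A : comUnitRingType) (A_local : is_local A) :=
  GRing.ComNzRing_isField.Build (residue_field A_local)
    (@residue_mulVf A A_local) (residue_inv0 A_local).

Section LocalDeterminant.
Variables (A : comUnitRingType) (A_local : is_local A).
Local Notation k := (residue_field A_local).

Local Notation res := (residue A_local).

Lemma unitmx_local n (G : 'M[A]_n) :
  (forall c : 'rV[A]_n, (exists i, c 0 i \is a GRing.unit) ->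
     exists j, (c *m G) 0 j \is a GRing.unit) -> G \in unitmx.
Proof.
move=> G_nondeg; rewrite unitmxE; apply/negPn/negP => det_nonunit.
have : \det (map_mx res G) == 0 by rewrite det_map_mx residue_eq0.
case/det0P => v v_neq0 vG0.
have [i vi_neq0] : exists i, v 0 i != 0.
  apply/existsP; rewrite -negb_forall; apply: contra v_neq0 => /forallP v0.
  by apply/eqP/matrixP => a j; rewrite ord1 mxE; apply/eqP.
pose c := map_mx (fun y : k => repr (y : residue_ring A_local)) v.
have cE : map_mx res c = v by apply/matrixP => a j; rewrite !mxE residue_repr.
have ci_unit : c 0 i \is a GRing.unit.
  by move: vi_neq0; rewrite -cE mxE residue_eq0 negbK.
have [j cGj_unit] := G_nondeg c (ex_intro _ i ci_unit).
have : map_mx res (c *m G) 0 j == 0 by rewrite map_mxM cE vG0 mxE.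
by rewrite mxE residue_eq0 cGj_unit.
Qed.

End LocalDeterminant.

Section FiniteBasis.
Variables (R T : comUnitRingType) (f : {rmorphism R -> T}).

Section Span.
Variables (I : eqType) (e : I -> T) (s : seq I).

Definition in_span (t : T) : Prop :=
  exists c : I -> R, t = \sum_(k <- s) f (c k) * e k.

Lemma in_span0 : in_span 0.
Proof. by exists (fun=> 0); rewrite big1 // => k _; rewrite rmorph0 mul0r. Qed.

Lemma in_spanD x y : in_span x -> in_span y -> in_span (x + y).
Proof.
move=> [c1 ->] [c2 ->]; exists (fun k => c1 k + c2 k).
by rewrite -big_split; apply: eq_bigr => k _; rewrite rmorphD mulrDl.
Qed.

Lemma in_spanZ r x : in_span x -> in_span (f r * x).
Proof.
move=> [c ->]; exists (fun k => r * c k).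
by rewrite mulr_sumr; apply: eq_bigr => k _; rewrite rmorphM mulrA.
Qed.

Lemma in_span_sum (J : eqType) (r : seq J) (F : J -> R) (G : J -> T) :
  (forall j, j \in r -> in_span (G j)) -> in_span (\sum_(j <- r) f (F j) * G j).
Proof.
move=> G_span; rewrite big_seq; apply: big_ind => //; first exact: in_span0.
  exact: in_spanD.
by move=> j jr; apply/in_spanZ/G_span.
Qed.

Lemma in_span_basis k : uniq s -> k \in s -> in_span (e k).
Proof.
move=> s_uniq ks; exists (fun k' => (k' == k)%:R).
rewrite (bigD1_seq k) //= eqxx rmorph1 mul1r big1 ?addr0 // => k' /negPf ->.
by rewrite rmorph0 mul0r.
Qed.

End Span.

Lemma module_finite_free_support : module_finite f -> forall (I : eqType) (e : I -> T),
  (forall t, exists (s : seq I) (c : I -> R), t = \sum_(i <- s) f (c i) * e i) ->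
  exists s : seq I, uniq s /\ forall t, in_span e s t.
Proof.
move=> [N [g g_span]] I e e_span.
have [S S_span] := fin_all_exists (fun i : 'I_N => e_span (g i)).
pose s := undup (flatten [seq S i | i <- enum 'I_N]).
exists s; split=> [|t]; first exact: undup_uniq.
have [c ->] := g_span t; apply: in_span_sum => i _.
have [C ->] := S_span i; apply: in_span_sum => k kS.
apply: in_span_basis; first exact: undup_uniq.
by rewrite mem_undup; apply/flatten_mapP; exists i; rewrite ?mem_enum.
Qed.

Lemma module_free_finite_basis : module_finite f -> module_free f ->
  exists n (b : 'I_n.+1 -> T),
    (forall t, exists c : 'I_n.+1 -> R, t = \sum_i f (c i) * b i) /\
    (forall c : 'I_n.+1 -> R, \sum_i f (c i) * b i = 0 -> forall i, c i = 0).
Proof.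
move=> T_finite [I [e [e_span e_free]]].
have [[|k0 s] [s_uniq s_span]] := module_finite_free_support T_finite e_span.
  by have [c] := s_span 1; rewrite big_nil => /eqP; rewrite oner_eq0.
exists (size s), (fun i => e (nth k0 (k0 :: s) i)); split.
  by move=> t; have [c ->] := s_span t; exists (c \o nth k0 (k0 :: s)); rewrite (big_nth k0) big_mkord.
move=> d d0 i; pose c k := d (inord (index k (k0 :: s))).
have cE (j : 'I_(size s).+1) : c (nth k0 (k0 :: s) j) = d j by rewrite /c index_uniq // inord_val.
rewrite -cE; apply: e_free s_uniq _ _ _; last exact: mem_nth.
by rewrite (big_nth k0) big_mkord -[RHS]d0; apply: eq_bigr => j _; rewrite cE.
Qed.

End FiniteBasis.

Section Coordinates.
Variables (R T : comUnitRingType) (f : {rmorphism R -> T}).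
Variables (n : nat) (b : 'I_n.+1 -> T).
Hypotheses (b_span : forall t, exists c : 'I_n.+1 -> R, t = \sum_i f (c i) * b i)
           (b_free : forall c : 'I_n.+1 -> R, \sum_i f (c i) * b i = 0 -> forall i, c i = 0).

Lemma bcoord_exists t : exists c : {ffun 'I_n.+1 -> R}, t == \sum_i f (c i) * b i.
Proof.
have [c ->] := b_span t; exists (finfun c); apply/eqP.
by apply: eq_bigr => i _; rewrite ffunE.
Qed.

Definition bcoord t : 'I_n.+1 -> R := xchoose (bcoord_exists t).

Lemma bcoordK t : \sum_i f (bcoord t i) * b i = t.
Proof. exact/esym/eqP/(xchooseP (bcoord_exists t)). Qed.

Lemma bcoord_sum (c : 'I_n.+1 -> R) i : bcoord (\sum_j f (c j) * b j) i = c i.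
Proof.
set t := \sum_j _; apply/eqP; rewrite -subr_eq0; apply/eqP.
apply: (b_free (c := fun j => bcoord t j - c j)).
under eq_bigr do rewrite rmorphB mulrBl.
by rewrite sumrB bcoordK subrr.
Qed.

Lemma bcoordD i x y : bcoord (x + y) i = bcoord x i + bcoord y i.
Proof.
rewrite -{1}(bcoordK x) -{1}(bcoordK y) -big_split /=.
under eq_bigr do rewrite -mulrDl -rmorphD.
by rewrite bcoord_sum.
Qed.

Lemma bcoordZ i r x : bcoord (f r * x) i = r * bcoord x i.
Proof.
rewrite -{1}(bcoordK x) mulr_sumr.
under eq_bigr do rewrite mulrA -rmorphM.
by rewrite bcoord_sum.
Qed.

Lemma bcoordN i x : bcoord (- x) i = - bcoord x i.
Proof. by rewrite -mulN1r -(rmorphN1 f) bcoordZ mulN1r. Qed.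

Lemma bcoord_basis i j : bcoord (b j) i = (j == i)%:R.
Proof.
suff -> : b j = \sum_k f (j == k)%:R * b k by rewrite bcoord_sum.
rewrite (bigD1 j) //= eqxx rmorph1 mul1r big1 ?addr0 // => k /negPf.
by rewrite eq_sym => ->; rewrite rmorph0 mul0r.
Qed.

Lemma linear_form_expand (psi : T -> R) :
  (forall x y, psi (x + y) = psi x + psi y) ->
  (forall r x, psi (f r * x) = r * psi x) ->
  forall x, psi x = \sum_i bcoord x i * psi (b i).
Proof.
move=> psiD psiZ x; rewrite -{1}(bcoordK x) (linear_form_sum psiD).
by apply: eq_bigr => i _; rewrite psiZ.
Qed.

Lemma not_mT_bcoord_unit t : ~ mT f t -> exists i, bcoord t i \is a GRing.unit.
Proof.
move=> t_nmT; apply: NNPP => no_unit; apply: t_nmT.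
rewrite -(bcoordK t); apply: (is_ideal_sum (mT_ideal f)) => i _.
by apply: mT_rmorph; apply/negP => ti_unit; apply: no_unit; exists i.
Qed.

Definition lmul_mx (x : T) : 'M[R]_n.+1 := \matrix_(i, j) bcoord (x * b i) j.

Lemma lmul_mxB x y : lmul_mx (x - y) = lmul_mx x - lmul_mx y.
Proof. by apply/matrixP => i j; rewrite !mxE mulrBl bcoordD bcoordN. Qed.

Lemma lmul_mx_scalar r : lmul_mx (f r) = r%:M.
Proof. by apply/matrixP => i j; rewrite !mxE bcoordZ bcoord_basis mulr_natr. Qed.

Lemma lmul_mxM x y : lmul_mx (x * y) = lmul_mx x * lmul_mx y.
Proof.
apply/matrixP => i k; rewrite -mulmxE !mxE (mulrC x) -mulrA.
have yD u v : bcoord (y * (u + v)) k = bcoord (y * u) k + bcoord (y * v) k.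
  by rewrite mulrDr bcoordD.
have yZ r u : bcoord (y * (f r * u)) k = r * bcoord (y * u) k.
  by rewrite mulrCA bcoordZ.
rewrite (linear_form_expand yD yZ); apply: eq_bigr => j _.
by rewrite !mxE.
Qed.

Lemma lmul_mx1 : lmul_mx 1 = 1.
Proof. by rewrite -(rmorph1 f) lmul_mx_scalar. Qed.

HB.instance Definition _ := GRing.isZmodMorphism.Build T 'M[R]_n.+1 lmul_mx lmul_mxB.
HB.instance Definition _ := GRing.isMonoidMorphism.Build T 'M[R]_n.+1 lmul_mx
  (lmul_mx1, lmul_mxM).

Lemma lmul_mx_eq0 z : lmul_mx z = 0 -> z = 0.
Proof.
move=> z0; have zb i : z * b i = 0.
  rewrite -(bcoordK (z * b i)) big1 // => j _.
  by have := congr1 (fun M : 'M_n.+1 => M i j) z0; rewrite !mxE => ->; rewrite rmorph0 mul0r.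
by rewrite -[z]mulr1 -(bcoordK 1) mulr_sumr big1 // => i _; rewrite mulrCA zb mulr0.
Qed.

Lemma integral_over_basis x : exists p : {poly R}, p \is monic /\ (map_poly f p).[x] = 0.
Proof.
exists (char_poly (lmul_mx x)); split; first exact: char_poly_monic.
apply: lmul_mx_eq0; rewrite -horner_map -map_poly_comp.
rewrite (eq_map_poly lmul_mx_scalar); exact: Cayley_Hamilton.
Qed.

Lemma nonunit_expr_mT : is_local T -> forall x, nonunit x -> exists k, mT f (x ^+ k).
Proof.
move=> T_local x x_nonunit; have [p [p_monic px0]] := integral_over_basis x.
exact: monic_root_expr_mT px0 x_nonunit.
Qed.

End Coordinates.

Section Duality.
Variables (R T : comUnitRingType) (f : {rmorphism R -> T}).
Variables (n : nat) (b : 'I_n.+1 -> T).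
Hypotheses (b_span : forall t, exists c : 'I_n.+1 -> R, t = \sum_i f (c i) * b i)
           (b_free : forall c : 'I_n.+1 -> R, \sum_i f (c i) * b i = 0 -> forall i, c i = 0).
Variable psi : T -> R.
Hypotheses (psiD : forall x y, psi (x + y) = psi x + psi y)
           (psiZ : forall r x, psi (f r * x) = r * psi x).
Hypotheses (R_local : is_local R)
           (psi_nondeg : forall t, ~ mT f t -> exists x, psi (t * x) \is a GRing.unit).

Definition gram : 'M[R]_n.+1 := \matrix_(i, j) psi (b i * b j).

Lemma gram_row (c : 'rV[R]_n.+1) j :
  (c *m gram) 0 j = psi ((\sum_i f (c 0 i) * b i) * b j).
Proof.
rewrite !mxE mulr_suml (linear_form_sum psiD); apply: eq_bigr => i _.
by rewrite mxE -mulrA psiZ.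
Qed.

Lemma gram_unitmx : gram \in unitmx.
Proof.
apply: (unitmx_local R_local) => c [i ci_unit].
set t := \sum_i f (c 0 i) * b i.
have t_nmT : ~ mT f t.
  move/(linear_form_mT (bcoordD b_span b_free i) (bcoordZ b_span b_free i) R_local).
  by rewrite bcoord_sum // /nonunit ci_unit.
have [x tx_unit] := psi_nondeg t_nmT.
apply: NNPP => no_unit.
suff : nonunit (psi (t * x)) by rewrite /nonunit tx_unit.
rewrite -(bcoordK b_span x) mulr_sumr (linear_form_sum psiD).
apply: (is_ideal_sum R_local) => j _; rewrite mulrCA psiZ; apply: (is_idealMl R_local).
by rewrite -gram_row; apply/negP => cGj_unit; apply: no_unit; exists j.
Qed.

Lemma gram_represents (rho : T -> R) :
  (forall x y, rho (x + y) = rho x + rho y) ->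
  (forall r x, rho (f r * x) = r * rho x) ->
  exists t, forall y, rho y = psi (t * y).
Proof.
move=> rhoD rhoZ; pose c := \row_j rho (b j) *m invmx gram.
set t := \sum_i f (c 0 i) * b i; exists t => y.
have tD u v : psi (t * (u + v)) = psi (t * u) + psi (t * v) by rewrite mulrDr psiD.
have tZ r u : psi (t * (f r * u)) = r * psi (t * u) by rewrite mulrCA psiZ.
rewrite (linear_form_expand b_span rhoD rhoZ).
rewrite (linear_form_expand b_span tD tZ); apply: eq_bigr => j _.
by rewrite -gram_row mulmxKV ?gram_unitmx // mxE.
Qed.

Lemma gram_faithful t : (forall y, psi (t * y) = 0) -> t = 0.
Proof.
move=> t0; pose d := \row_i bcoord b_span t i.
have dt : \sum_i f (d 0 i) * b i = t.
  by rewrite -[RHS](bcoordK b_span); apply: eq_bigr => i _; rewrite mxE.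
have dG0 : d *m gram = 0 by apply/matrixP => a j; rewrite ord1 gram_row dt t0 mxE.
have d0 : d = 0 by rewrite -(mulmxK gram_unitmx d) dG0 mul0mx.
by rewrite -dt d0 big1 // => i _; rewrite mxE rmorph0 mul0r.
Qed.

End Duality.

Theorem theorem10 (R T : comUnitRingType) (f : {rmorphism R -> T})
  (J : T -> Prop) :
  noetherian_local R -> noetherian_local T ->
  local_hom f -> module_finite f -> module_free f ->
  closed_fiber_gorenstein f ->
  is_ideal J ->
  (splits f J <-> exists t, ann J t /\ ~ mT f t).
Proof.
move=> [_ R_local] [T_noeth T_local] _ T_finite T_free [s0 [s0_nmT s0_socle s0_gen]] J_ideal.
have [n [b [b_span b_free]]] := module_free_finite_basis T_finite T_free.
have [i0 s0_unit] := not_mT_bcoord_unit b_span s0_nmT.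
pose psi t := bcoord b_span t i0.
have psiD x y : psi (x + y) = psi x + psi y := bcoordD b_span b_free i0 x y.
have psiZ r x : psi (f r * x) = r * psi x := bcoordZ b_span b_free i0 r x.
have psi_nondeg := fiber_socle_form_nondeg T_noeth (nonunit_expr_mT b_span b_free T_local)
  s0_socle s0_gen psiD psiZ R_local s0_unit.
split=> [[rho [rhoD rhoZ rhoJ rho1]] | [t [tJ t_nmT]]].
- have [t rhoE] := gram_represents b_span b_free psiD psiZ R_local psi_nondeg rhoD rhoZ.
  exists t; split=> [j Jj | /(linear_form_mT psiD psiZ R_local)].
  + apply: (gram_faithful b_span b_free psiD psiZ R_local psi_nondeg) => y.
    by rewrite -mulrA -rhoE; apply/rhoJ/(is_idealMr J_ideal).
  + by rewrite -[t]mulr1 -rhoE rho1 /nonunit unitr1.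
- have [x tx_unit] := psi_nondeg t t_nmT.
  exists (fun y => (psi (t * x))^-1 * psi (t * x * y)); split=> [y z|r y|j Jj|].
  + by rewrite mulrDr psiD mulrDr.
  + by rewrite mulrCA psiZ mulrCA.
  + by rewrite [t * x * j]mulrAC (tJ j Jj) mul0r linear_form0 ?mulr0.
  + by rewrite mulr1 mulVr.
Qed.
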